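(* In the construction below, let $k\in\{0,\dots,K-1\}$ and let $S\subseteq X$ be a nonempty set with $\mathrm{diam}_X(S)\le 2\tau^{-k}$. If $u'\in S\cap U_{k+1}$, then $(\mathsf f_k(S),u')\in A_k$.
   Context: Construction. Let $(X,d)$ be a metric space with $n=|X|\ge2$ and $\mathrm{diam}(X)=1$. For $S\subseteq X$, $r\ge0$: $B_X(S,r):=\{x\in X:\exists s\in S,\ d(x,s)\le r\}$ and $B_X(x,r):=B_X(\{x\},r)$. Let $\varepsilon_0:=\min\{d(x,y):x\ne y\}$, $\tau:=12$, $K:=1+\lceil\log_\tau(1/\varepsilon_0)\rceil$. For $\eta>0$ the greedy $\eta$-net is built as: $N_0=\emptyset$; for $j\ge1$, $S_j:=X\setminus B_X(N_{j-1},\eta)$; if $S_j=\emptyset$ output $N_{j-1}$; else pick $x_j\in S_j$ maximizing $|B_X(x,\eta/3)|$ and set $N_j=N_{j-1}\cup\{x_j\}$. For $k=0,\dots,K$ let $U_k$ be the greedy $\tau^{-k}$-net. For $k<K$, $A_k$ is the set of pairs $(u,u')\in U_k\times U_{k+1}$ with (i) $d(u,u')\le4\tau^{-k}$ and (ii) $|B_X(u,\tau^{-k}/3)|\ge\max\{|B_X(w,\tau^{-k}/3)|:w\in B_X(u',6\tau^{-(k+1)})\}$. For $S\subseteq X$ nonempty, $\mathsf f_k(S)$ denotes a (fixed) maximizer of $|B_X(y,\tau^{-k}/3)|$ over $y\in B_X(S,2\tau^{-k})\cap U_k$. *)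

From HB Require Import structures.
From mathcomp Require Import all_boot all_order all_algebra.
From mathcomp Require Import all_classical all_reals exp.
Set Implicit Arguments. Unset Strict Implicit. Unset Printing Implicit Defensive.
Import Order.TTheory GRing.Theory Num.Theory.
Local Open Scope ring_scope.

Section Defs.
Variables (R : realType) (T : finType) (d : T -> T -> R).

Definition is_metric : Prop :=
  [/\ forall x y, 0 <= d x y,
      forall x y, d x y = 0 <-> x = y,
      forall x y, d x y = d y x &
      forall x y z, d x z <= d x y + d y z].

(* diameter of a subset (0 for the empty set) *)
Definition diam (S : {set T}) : R :=
  \big[Num.max/0]_(p : T * T | (p.1 \in S) && (p.2 \in S)) d p.1 p.2.

Definition ballS (S : {set T}) (r : R) : {set T} :=
  [set x | [exists s in S, d x s <= r]].
Definition ball (x : T) (r : R) : {set T} := ballS [set x] r.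

(* eps_0 = min distance between distinct points (default value 1 is
   irrelevant as soon as |X| >= 2) *)
Definition eps0 : R :=
  \big[Num.min/1]_(p : T * T | p.1 != p.2) d p.1 p.2.

Definition tau : R := 12.

Definition Kpar : int := 1 + Num.ceil (ln (eps0^-1) / ln tau).

(* N is a possible output of the greedy eta-net procedure (any
   tie-breaking): xs = [x_1; ...; x_m] is the sequence of picked points,
   N_{j} = {x_1,...,x_j}. *)
Definition greedy_net (eta : R) (N : {set T}) : Prop :=
  exists xs : seq T,
    [/\ N = [set x in xs],
        (forall j : 'I_(size xs),
           let Nj := [set x in take j xs] in
           let xj := tnth (in_tuple xs) j in
           xj \notin ballS Nj eta /\
           forall x, x \notin ballS Nj eta ->
             (#|ball x (eta / 3)| <= #|ball xj (eta / 3)|)%N) &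
        forall x, x \in ballS [set x in xs] eta].
End Defs.

(* The distance bound is the triangle inequality through a point of S within
   2 tau^-k of f_k(S).  For the ball-size condition, a point w near u' is
   first covered by some greedy pick x of U_k; when x was picked, w was still
   uncovered and so was a candidate, whence |B(w, tau^-k/3)| <= |B(x, tau^-k/3)|.
   Since d(x, u') <= tau^-k + tau^-k/2 <= 2 tau^-k, x competes with f_k(S),
   which has the largest ball among such points. *)
From HB Require Import structures.
From mathcomp Require Import all_boot all_order all_algebra.
From mathcomp Require Import all_classical all_reals exp.
From mathcomp Require Import lra.
Set Implicit Arguments. Unset Strict Implicit.
Import Order.TTheory GRing.Theory Num.Theory.
Local Open Scope ring_scope.

Section Balls.
Variables (R : realType) (T : finType) (d : T -> T -> R).

Lemma ballSP (S : {set T}) (r : R) x :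
  reflect (exists2 s, s \in S & d x s <= r) (x \in ballS d S r).
Proof. by rewrite inE; apply: (iffP exists_inP) => -[s]; exists s. Qed.

Lemma le_diam (S : {set T}) s t : s \in S -> t \in S -> d s t <= diam d S.
Proof.
move=> sS tS; rewrite /diam (bigD1 (s, t)) /=; last by rewrite sS tS.
by rewrite le_max lexx.
Qed.

Lemma greedy_net_dominated (eta : R) (N : {set T}) : greedy_net d eta N ->
  forall w, exists2 x, x \in N &
    d w x <= eta /\ (#|ball d w (eta / 3)| <= #|ball d x (eta / 3)|)%N.
Proof.
move=> [xs [-> pick cover]] w.
have w_covered : exists j, w \in ballS d [set x in take j xs] eta.
  by exists (size xs); rewrite take_size; apply: cover.
case: (ex_minnP w_covered) => -[|j] w_in_j jmin.
  by case/ballSP: w_in_j => s; rewrite take0 inE.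
have w_notin_j : w \notin ballS d [set x in take j xs] eta.
  by apply/negP => /jmin; rewrite ltnn.
have j_lt : (j < size xs)%N.
  rewrite ltnNge; apply: contra w_notin_j => le_xs_j.
  by rewrite take_oversize // -(take_oversize (leqW le_xs_j)).
have [_ greedy] := pick (Ordinal j_lt).
exists (nth w xs j); first by rewrite inE mem_nth.
split; last by rewrite -(tnth_nth w (in_tuple xs) (Ordinal j_lt)) greedy.
case/ballSP: w_in_j => s; rewrite (take_nth w j_lt) inE mem_rcons in_cons.
case/orP => [/eqP -> //| s_in dws].
by case/negP: w_notin_j; apply/ballSP; exists s; rewrite ?inE.
Qed.

End Balls.

Lemma tau_invXS (R : realType) (k : nat) : tau R ^- k.+1 = tau R ^- k / 12.
Proof. by rewrite /tau exprS invfM mulrC. Qed.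

Theorem lemma3p3 (R : realType) (T : finType) (d : T -> T -> R)
  (Hmetric : is_metric d)
  (Hn : (2 <= #|T|)%N)
  (Hdiam : diam d [set: T] = 1)
  (U : nat -> {set T})
  (HU : forall k : nat, (Posz k <= Kpar d)%R -> greedy_net d (tau R ^- k) (U k))
  (k : nat) (Hk : (Posz k < Kpar d)%R)
  (S : {set T}) (HS0 : S != finset.set0)
  (HSdiam : diam d S <= 2 * tau R ^- k)
  (fS : T)
  (HfS : fS \in ballS d S (2 * tau R ^- k) :&: U k)
  (HfSmax : forall y, y \in ballS d S (2 * tau R ^- k) :&: U k ->
      (#|ball d y (tau R ^- k / 3)| <= #|ball d fS (tau R ^- k / 3)|)%N)
  (u' : T) (Hu' : u' \in S :&: U k.+1) :
  (* (fS, u') \in A_k *)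
  [/\ fS \in U k, u' \in U k.+1,
      d fS u' <= 4 * tau R ^- k &
      (\max_(w in ballS d [set u'] (6 * tau R ^- k.+1)) #|ball d w (tau R ^- k / 3)|
         <= #|ball d fS (tau R ^- k / 3)|)%N].
Proof.
have [_ _ dsym dtri] := Hmetric.
rewrite tau_invXS; set r := tau R ^- k in HSdiam HfS HfSmax *.
have r_gt0 : 0 < r by rewrite invr_gt0 exprn_gt0.
move: HfS Hu'; rewrite !finset.in_setI => /andP[fS_near_S fS_U] /andP[u'_S u'_U].
split => //.
  case/ballSP: fS_near_S => s sS dfs.
  have := le_diam d sS u'_S; have := dtri fS s u'; lra.
apply/bigmax_leqP => w /ballSP[_ /set1P -> dwu].
have [x x_U [dwx ball_w]] := greedy_net_dominated (HU k (ltW Hk)) w.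
apply: leq_trans ball_w (HfSmax _ _); rewrite inE x_U andbT.
apply/ballSP; exists u' => //.
rewrite -/r in dwx.
by apply: le_trans (dtri x w u') _; rewrite dsym; lra.
Qed.
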